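(* Consider the partial-block protocol described in the context, on a finite set of agents $A$ with a connected undirected connectivity graph $G=(A,E)$ and block length $L$. If at some epoch $t$ a deadlock occurs, i.e. $D(i)$ holds for every $i\in A$, then every agent's partial block contains its own ID: $i\in pb_i^{(t)}$ for all $i\in A$.
   Context: Let $A$ be a finite set of agents (agent IDs) and $G=(A,E)$ a connected undirected graph; $\Gamma_i$ denotes the set of neighbors of $i$. Fix an integer $L\ge 1$ (block length). Each agent $i$ maintains a partial block $pb_i\subseteq A$ (a set of agent IDs). The system runs in epochs $t=0,1,2,\dots$; $pb_i^{(t)}$ is agent $i$'s partial block at the start of epoch $t$. In each epoch: (C1) every agent $i$ with $i\notin pb_i$ adds $i$ to $pb_i$; (C2) every agent $i$ sends its $pb_i$ to every neighbor $j\in\Gamma_i$. When an agent $i$ receives a partial block $P$ (from a neighbor or via a direct message) it applies the rule: (R1) if $|P\setminus\{i\}|>|pb_i\setminus\{i\}|$, agent $i$ sets $pb_i:=P$; (R2) otherwise, if $|P\setminus\{i\}|=|pb_i\setminus\{i\}|$ and $P\neq pb_i$, agent $i$ sends its current $pb_i$ directly to every agent in $P\setminus pb_i$, each of which processes it by the same rule; (R3) otherwise the received block is discarded. All received partial blocks are assumed to pass all validity and similarity checks. For an agent $i$ and epoch $t$, the predicate $D(i)$ means: $pb_i^{(t)}=pb_i^{(t+1)}$ and $|pb_i^{(t)}|<L$. A deadlock at epoch $t$ means that $D(i)$ holds for all $i\in A$. *)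

From mathcomp Require Import all_boot.
Set Implicit Arguments. Unset Strict Implicit. Unset Printing Implicit Defensive.

Section Protocol.
Variable A : finType.
Variable adj : rel A.

(* a state assigns to every agent its partial block *)
Definition state := A -> {set A}.

Definition neighbors (i : A) : {set A} := [set j | adj i j].

Definition connected_undirected_graph : Prop :=
  symmetric adj /\ irreflexive adj /\ (forall i j : A, connect adj i j).

Definition upd (pb : state) (j : A) (P : {set A}) : state :=
  fun k => if k == j then P else pb k.

Definition C1 (pb : state) : state := fun i => i |: pb i.

(* intra-epoch configuration: current partial blocks, pending messages
   (recipient, block), and the set of agents that already performed (C2) *)
Record config := Config { cpb : state; cmsgs : seq (A * {set A}); csent : {set A} }.

Inductive step : config -> config -> Prop :=
  (* (C2): agent i sends its current pb_i to every neighbour *)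
  | StepSend (pb : state) (ms : seq (A * {set A})) (sent : {set A}) (i : A) :
      i \notin sent ->
      step (Config pb ms sent)
           (Config pb (ms ++ [seq (j, pb i) | j <- enum (neighbors i)]) (i |: sent))
  | StepR1 (pb : state) (m1 m2 : seq (A * {set A})) (sent : {set A}) (j : A) (P : {set A}) :
      #|P :\ j| > #|pb j :\ j| ->
      step (Config pb (m1 ++ (j, P) :: m2) sent) (Config (upd pb j P) (m1 ++ m2) sent)
  | StepR2 (pb : state) (m1 m2 : seq (A * {set A})) (sent : {set A}) (j : A) (P : {set A}) :
      #|P :\ j| = #|pb j :\ j| -> P != pb j ->
      step (Config pb (m1 ++ (j, P) :: m2) sent)
           (Config pb (m1 ++ m2 ++ [seq (k, pb j) | k <- enum (P :\: pb j)]) sent)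
  | StepR3 (pb : state) (m1 m2 : seq (A * {set A})) (sent : {set A}) (j : A) (P : {set A}) :
      ~ (#|P :\ j| > #|pb j :\ j|) ->
      ~ (#|P :\ j| = #|pb j :\ j| /\ P != pb j) ->
      step (Config pb (m1 ++ (j, P) :: m2) sent) (Config pb (m1 ++ m2) sent).

Inductive steps : config -> config -> Prop :=
  | steps_refl c : steps c c
  | steps_trans c1 c2 c3 : step c1 c2 -> steps c2 c3 -> steps c1 c3.

(* one epoch: (C1) by all agents, then an arbitrary interleaving of the (C2)
   sends and the message deliveries, ending when every agent has sent and no
   message is pending *)
Definition epoch (pb pb' : state) : Prop :=
  steps (Config (C1 pb) [::] set0) (Config pb' [::] setT).

Definition D (L : nat) (pbs : nat -> state) (t : nat) (i : A) : Prop :=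
  pbs t i = pbs t.+1 i /\ #|pbs t i| < L.

Definition deadlock (L : nat) (pbs : nat -> state) (t : nat) : Prop :=
  forall i : A, D L pbs t i.
End Protocol.

(** After (C1) agent [i] holds [i |: pb_i], and within an epoch its block only
    changes through (R1), which strictly increases the number of foreign IDs.
    If [i] were missing from [pb_i], then [i |: pb_i] would already have as many
    foreign IDs as [pb_i] itself, so ending the epoch with [pb_i] again is
    impossible. *)

From mathcomp Require Import all_boot.

Set Implicit Arguments.
Unset Strict Implicit.
Unset Printing Implicit Defensive.

Section BlockGrowth.

Variables (A : finType) (adj : rel A) (i : A).

Definition grows_from (X Y : {set A}) : Prop :=
  Y = X \/ #|X :\ i| < #|Y :\ i|.

Lemma grows_from_trans (X Y Z : {set A}) :
  grows_from X Y -> grows_from Y Z -> grows_from X Z.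
Proof.
move=> [-> //|ltXY] [->|ltYZ]; right => //.
exact: ltn_trans ltXY ltYZ.
Qed.

Lemma step_grows c1 c2 : step adj c1 c2 -> grows_from (cpb c1 i) (cpb c2 i).
Proof.
case=> [*|pb m1 m2 sent j P ltP|*|*] /=; try by left.
rewrite /grows_from /upd; case: eqP => [->|_]; by [right | left].
Qed.

Lemma steps_grows c1 c2 : steps adj c1 c2 -> grows_from (cpb c1 i) (cpb c2 i).
Proof.
elim=> {c1 c2} [c|c1 c2 c3 st _ IH]; first by left.
exact: grows_from_trans (step_grows st) IH.
Qed.

Lemma epoch_grows (pb pb' : state A) :
  epoch adj pb pb' -> grows_from (i |: pb i) (pb' i).
Proof. exact: steps_grows. Qed.

Lemma epoch_fixed_mem (pb pb' : state A) :
  epoch adj pb pb' -> pb' i = pb i -> i \in pb i.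
Proof.
move=> ep fixed; apply/negPn/negP => notin.
have := epoch_grows ep; rewrite fixed => -[eq_pb|].
  by move: notin; rewrite eq_pb setU11.
rewrite setU1K //; apply/negP; rewrite -leqNgt.
exact/subset_leq_card/subD1set.
Qed.

End BlockGrowth.

Theorem lemma1 (A : finType) (adj : rel A) (L : nat) (pbs : nat -> A -> {set A}) (t : nat) :
  connected_undirected_graph adj ->
  1 <= L ->
  (forall s : nat, epoch adj (pbs s) (pbs s.+1)) ->
  deadlock L pbs t ->
  forall i : A, i \in pbs t i.
Proof.
move=> _ _ epochs dead i.
have [fixed _] := dead i.
exact: epoch_fixed_mem (epochs t) (esym fixed).
Qed.
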